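(* Let $G$ be a second countable locally compact group, $\Omega$ a homogeneous space of $G$, $F$ a closed subgroup of $G$, and $y\in\Omega$ such that $\overline{Fy}$ is a compact $F$-minimal subset of $\Omega$ but $F/(F\cap G_y)$ is not compact (equivalently $Fy$ is not compact). Then the identity $e$ lies in the closure of $\{g\in G\setminus F: gy\in Fy\}$.
   Context: $G_y=\{h\in G: hy=y\}$ is the stabilizer of $y$. For a closed subgroup $F\subset G$, a closed $F$-invariant subset $Y\subset\Omega$ is called $F$-minimal if it contains no proper nonempty closed $F$-invariant subset, i.e. $Fy$ is dense in $Y$ for every $y\in Y$. *)

From Stdlib Require Import List Classical.

Definition is_topology {X : Type} (op : (X -> Prop) -> Prop) : Prop :=
  op (fun _ => True) /\
  (forall U V, op U -> op V -> op (fun x => U x /\ V x)) /\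
  (forall (I : Type) (U : I -> X -> Prop),
      (forall i, op (U i)) -> op (fun x => exists i, U i x)).

Definition is_closed {X : Type} (op : (X -> Prop) -> Prop) (A : X -> Prop) : Prop :=
  op (fun x => ~ A x).

Definition in_closure {X : Type} (op : (X -> Prop) -> Prop) (A : X -> Prop) (x : X) : Prop :=
  forall U, op U -> U x -> exists z, U z /\ A z.

Definition is_compact {X : Type} (op : (X -> Prop) -> Prop) (A : X -> Prop) : Prop :=
  forall (I : Type) (U : I -> X -> Prop),
    (forall i, op (U i)) -> (forall x, A x -> exists i, U i x) ->
    exists l : list I, forall x, A x -> exists i, In i l /\ U i x.

Definition hausdorff {X : Type} (op : (X -> Prop) -> Prop) : Prop :=
  forall x y, x <> y -> exists U V, op U /\ op V /\ U x /\ V y /\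
    forall z, U z -> V z -> False.

Definition locally_compact {X : Type} (op : (X -> Prop) -> Prop) : Prop :=
  forall x, exists U K, op U /\ U x /\ is_compact op K /\ forall z, U z -> K z.

Definition second_countable {X : Type} (op : (X -> Prop) -> Prop) : Prop :=
  exists B : nat -> X -> Prop, (forall n, op (B n)) /\
    forall U x, op U -> U x -> exists n, B n x /\ forall z, B n z -> U z.

Definition is_group {G : Type} (mul : G -> G -> G) (inv : G -> G) (e : G) : Prop :=
  (forall a b c, mul a (mul b c) = mul (mul a b) c) /\
  (forall a, mul e a = a) /\ (forall a, mul a e = a) /\
  (forall a, mul (inv a) a = e) /\ (forall a, mul a (inv a) = e).

Definition is_topological_group {G : Type} (opG : (G -> Prop) -> Prop)
  (mul : G -> G -> G) (inv : G -> G) (e : G) : Prop :=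
  is_topology opG /\ is_group mul inv e /\
  (forall a b U, opG U -> U (mul a b) ->
     exists V W, opG V /\ opG W /\ V a /\ W b /\
       forall v w, V v -> W w -> U (mul v w)) /\
  (forall U, opG U -> opG (fun g => U (inv g))).

Definition lcsc_group {G : Type} (opG : (G -> Prop) -> Prop)
  (mul : G -> G -> G) (inv : G -> G) (e : G) : Prop :=
  is_topological_group opG mul inv e /\ hausdorff opG /\
  locally_compact opG /\ second_countable opG.

Definition is_subgroup {G : Type} (mul : G -> G -> G) (inv : G -> G) (e : G)
  (F : G -> Prop) : Prop :=
  F e /\ (forall a b, F a -> F b -> F (mul a b)) /\ (forall a, F a -> F (inv a)).

Definition is_action {G O : Type} (mul : G -> G -> G) (e : G) (act : G -> O -> O) : Prop :=
  (forall x, act e x = x) /\ (forall g h x, act (mul g h) x = act g (act h x)).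

Definition stab {G O : Type} (act : G -> O -> O) (y : O) : G -> Prop :=
  fun g => act g y = y.

(* (O, act) is the homogeneous space G/H with H = G_{x0} a closed subgroup:
   the action is transitive, and O carries the quotient topology via g |-> g x0. *)
Definition homogeneous_space {G O : Type} (opG : (G -> Prop) -> Prop)
  (mul : G -> G -> G) (e : G) (opO : (O -> Prop) -> Prop) (act : G -> O -> O) (x0 : O) : Prop :=
  is_action mul e act /\
  (forall y, exists g, act g x0 = y) /\
  (forall U, opO U <-> opG (fun g => U (act g x0))) /\
  is_closed opG (stab act x0).

Definition orbit {G O : Type} (act : G -> O -> O) (F : G -> Prop) (y : O) : O -> Prop :=
  fun z => exists f, F f /\ act f y = z.

Definition F_invariant {G O : Type} (act : G -> O -> O) (F : G -> Prop) (Y : O -> Prop) : Prop :=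
  forall f z, F f -> Y z -> Y (act f z).

Definition F_minimal {G O : Type} (opO : (O -> Prop) -> Prop) (act : G -> O -> O)
  (F : G -> Prop) (Y : O -> Prop) : Prop :=
  is_closed opO Y /\ F_invariant act F Y /\
  forall Z : O -> Prop, (exists z, Z z) -> is_closed opO Z -> F_invariant act F Z ->
    (forall z, Z z -> Y z) -> forall z, Y z -> Z z.

(* F / H is compact (H a subgroup of F, quotient topology of the subspace topology on F):
   the projection F -> F/H is open, so this says every cover of F by open subsets of G
   has finitely many members U_i with F contained in the union of (U_i ∩ F) H. *)
Definition quotient_compact {G : Type} (opG : (G -> Prop) -> Prop) (mul : G -> G -> G)
  (F H : G -> Prop) : Prop :=
  forall (I : Type) (U : I -> G -> Prop),
    (forall i, opG (U i)) -> (forall f, F f -> exists i, U i f) ->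
    exists l : list I, forall f, F f ->
      exists i u h, In i l /\ U i u /\ F u /\ H h /\ f = mul u h.

(* Suppose some neighbourhood V of e satisfies: g in V and g y in F y force
   g in F.  Since g |-> g y is open, the same then holds with F y replaced by
   its closure Y.  Consequently every point f y of F y has the neighbourhood
   (f V) y meeting Y only inside F y, so Y \ F y is closed; it is also
   F-invariant and misses y, hence empty by minimality.  Thus F y = Y is
   compact, and covering it by the open sets (U_i ∩ f V) y shows that
   F/(F ∩ G_y) is compact. *)

From Stdlib Require Import List Classical FunctionalExtensionality PropExtensionality.

Lemma open_of_locally_open {X : Type} (op : (X -> Prop) -> Prop)
  (Htop : is_topology op) (S : X -> Prop) :
  (forall x, S x -> exists V, op V /\ V x /\ forall z, V z -> S z) -> op S.
Proof.
  intros HS. destruct Htop as [_ [_ Hunion]].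
  set (I := {V : X -> Prop | op V /\ forall z, V z -> S z}).
  assert (ES : S = fun x => exists i : I, proj1_sig i x).
  { extensionality x; apply propositional_extensionality; split.
    - intros Sx. destruct (HS x Sx) as [V [HV [Vx HVS]]].
      exists (exist _ V (conj HV HVS)). exact Vx.
    - intros [[V [HV HVS]] Vx]. exact (HVS x Vx). }
  rewrite ES. apply Hunion. intros [V [HV HVS]]. exact HV.
Qed.

Lemma closure_subset {X : Type} (op : (X -> Prop) -> Prop) (A : X -> Prop) x :
  A x -> in_closure op A x.
Proof. intros Ax U _ Ux. exists x. auto. Qed.

Lemma not_in_closure {X : Type} (op : (X -> Prop) -> Prop) (A : X -> Prop) x :
  ~ in_closure op A x -> exists U, op U /\ U x /\ forall z, U z -> ~ A z.
Proof.
  intros Hx. apply NNPP; intros Hno. apply Hx; intros U HU Ux.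
  apply NNPP; intros Hmiss. apply Hno. exists U.
  split; [exact HU | split; [exact Ux |]].
  intros z Uz Az. apply Hmiss. exists z. auto.
Qed.

Lemma F_minimal_empty_subset {G O : Type} (opO : (O -> Prop) -> Prop)
  (act : G -> O -> O) (F : G -> Prop) (Y Z : O -> Prop) (y : O) :
  F_minimal opO act F Y -> Y y ->
  is_closed opO Z -> F_invariant act F Z -> (forall z, Z z -> Y z) -> ~ Z y ->
  forall z, ~ Z z.
Proof.
  intros [_ [_ Hmin]] Yy HZcl HZinv HZY nZy z Zz.
  exact (nZy (Hmin Z (ex_intro _ z Zz) HZcl HZinv HZY y Yy)).
Qed.

Section HomogeneousSpace.

Variables (G : Type) (opG : (G -> Prop) -> Prop) (mul : G -> G -> G) (inv : G -> G) (e : G).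
Hypothesis HT : is_topological_group opG mul inv e.
Variables (O : Type) (opO : (O -> Prop) -> Prop) (act : G -> O -> O) (x0 : O).
Hypothesis HO : homogeneous_space opG mul e opO act x0.

Lemma mulKVg a b : mul a (mul (inv a) b) = b.
Proof.
  destruct HT as [_ [[Hass [Hel [_ [_ Hir]]]] _]].
  rewrite Hass, Hir, Hel. reflexivity.
Qed.

Lemma act_mul g h x : act (mul g h) x = act g (act h x).
Proof. destruct HO as [[_ Hact2] _]. apply Hact2. Qed.

Lemma act_invK g x : act (inv g) (act g x) = x.
Proof.
  destruct HT as [_ [[_ [_ [_ [Hil _]]]] _]]. destruct HO as [[Hact1 _] _].
  rewrite <- act_mul, Hil, Hact1. reflexivity.
Qed.

Lemma open_mulr (U : G -> Prop) c : opG U -> opG (fun g => U (mul g c)).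
Proof.
  intros HU. destruct HT as [Htop [_ [Hcont _]]].
  apply (open_of_locally_open _ Htop). intros g Ug.
  destruct (Hcont g c U HU Ug) as [V [W [HV [_ [Vg [Wc HVW]]]]]].
  exists V. repeat split; auto.
Qed.

Lemma open_mull (U : G -> Prop) c : opG U -> opG (fun g => U (mul c g)).
Proof.
  intros HU. destruct HT as [Htop [_ [Hcont _]]].
  apply (open_of_locally_open _ Htop). intros g Ug.
  destruct (Hcont c g U HU Ug) as [V [W [_ [HW [Vc [Wg HVW]]]]]].
  exists W. repeat split; auto.
Qed.

Lemma topology_homogeneous_space : is_topology opO.
Proof.
  destruct HT as [[HtT [HtI HtU]] _]. destruct HO as [_ [_ [HopO _]]].
  split; [| split].
  - apply HopO. exact HtT.
  - intros U V HU HV. apply HopO. apply HtI; apply HopO; assumption.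
  - intros I U HU. apply HopO. apply (HtU I (fun i g => U i (act g x0))).
    intros i. apply HopO. apply HU.
Qed.

(* If g0 x0 = y and g x0 = a y with a in A, then s := g^-1 a g0 fixes x0, so
   every g' with g' s g0^-1 in A satisfies g' x0 = (g' s g0^-1) y. *)
Lemma open_orbit_map (A : G -> Prop) (y : O) : opG A -> opO (orbit act A y).
Proof.
  intros HA.
  destruct HO as [[Hact1 _] [Htrans [HopO _]]].
  destruct HT as [Htop [[Hass [Hel [Her [Hil Hir]]]] _]].
  apply HopO. destruct (Htrans y) as [g0 Hg0].
  apply (open_of_locally_open _ Htop). intros g [a [Aa Ha]].
  set (s := mul (inv g) (mul a g0)).
  assert (Hs : act s x0 = x0).
  { unfold s. rewrite !act_mul, Hg0, Ha, act_invK. reflexivity. }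
  exists (fun g' => A (mul (mul g' s) (inv g0))). split; [| split].
  - apply (open_mulr (fun k => A (mul k (inv g0)))). apply open_mulr. exact HA.
  - unfold s. rewrite mulKVg, <- Hass, Hir, Her. exact Aa.
  - intros g' Ag'. exists (mul (mul g' s) (inv g0)). split; [exact Ag' |].
    rewrite <- Hg0, <- act_mul, <- Hass, Hil, Her, act_mul, Hs. reflexivity.
Qed.

Lemma orbit_act_cancel (F : G -> Prop) (y w : O) f :
  is_subgroup mul inv e F -> F f -> orbit act F y (act f w) -> orbit act F y w.
Proof.
  intros [_ [FM FI]] Ff [f' [Ff' Hf']]. exists (mul (inv f) f').
  split; [apply FM; auto |]. rewrite act_mul, Hf', act_invK. reflexivity.
Qed.

Lemma orbit_refl (F : G -> Prop) (y : O) :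
  is_subgroup mul inv e F -> orbit act F y y.
Proof.
  intros [Fe _]. destruct HO as [[Hact1 _] _]. exists e. auto.
Qed.

Section Transversal.

Variables (F : G -> Prop) (y : O).
Hypothesis HFsub : is_subgroup mul inv e F.
Hypothesis HFcl : is_closed opG F.
Hypothesis Hmin : F_minimal opO act F (in_closure opO (orbit act F y)).

Local Notation Y := (in_closure opO (orbit act F y)).

Variable V : G -> Prop.
Hypothesis HV : opG V.
Hypothesis Ve : V e.
Hypothesis HVF : forall g, V g -> orbit act F y (act g y) -> F g.

Lemma transversal_closure v : V v -> Y (act v y) -> F v.
Proof.
  intros Vv Yv. apply NNPP; intros nFv.
  destruct HT as [[_ [HtI _]] _].
  assert (HVnF : opG (fun g => V g /\ ~ F g)) by (apply HtI; assumption).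
  destruct (Yv _ (open_orbit_map _ y HVnF)) as [z [[a [[Va nFa] Ha]] Oz]].
  { exists v. auto. }
  apply nFa, HVF; [exact Va |]. rewrite Ha. exact Oz.
Qed.

Lemma translated_transversal_closure f a :
  F f -> V (mul (inv f) a) -> Y (act a y) -> F a.
Proof.
  intros Ff Va Ya. destruct HFsub as [_ [FM FI]]. destruct Hmin as [_ [HYinv _]].
  rewrite <- (mulKVg f a). apply FM; [exact Ff |].
  apply transversal_closure; [exact Va |].
  rewrite act_mul. apply HYinv; auto.
Qed.

Lemma closed_closure_minus_orbit :
  is_closed opO (fun z => Y z /\ ~ orbit act F y z).
Proof.
  destruct Hmin as [HYcl _].
  apply (open_of_locally_open _ topology_homogeneous_space). intros x Hx.
  destruct (classic (Y x)) as [Yx | nYx].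
  - assert (Ox : orbit act F y x) by (apply NNPP; intros nOx; apply Hx; split; assumption).
    destruct Ox as [f [Ff Hf]].
    exists (orbit act (fun g => V (mul (inv f) g)) y). split; [| split].
    + apply open_orbit_map, open_mull, HV.
    + exists f. destruct HT as [_ [[_ [_ [_ [Hil _]]]] _]]. rewrite Hil. auto.
    + intros w [a [Va Ha]] [Yw nOw]. apply nOw. exists a. split; [| exact Ha].
      apply (translated_transversal_closure f); [exact Ff | exact Va |].
      rewrite Ha. exact Yw.
  - exists (fun z => ~ Y z). split; [exact HYcl | split; [exact nYx |]].
    intros w nYw [Yw _]. auto.
Qed.

Lemma closure_orbit_sub_orbit z : Y z -> orbit act F y z.
Proof.
  intros Yz. apply NNPP; intros nOz.
  destruct Hmin as [_ [HYinv _]].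
  refine (F_minimal_empty_subset opO act F Y _ y Hmin _
            closed_closure_minus_orbit _ _ _ z (conj Yz nOz)).
  - apply closure_subset, orbit_refl, HFsub.
  - intros f w Ff [Yw nOw]. split; [apply HYinv; auto |].
    intros Ofw. apply nOw. exact (orbit_act_cancel F y w f HFsub Ff Ofw).
  - intros w [Yw _]. exact Yw.
  - intros [_ nOy]. apply nOy, orbit_refl, HFsub.
Qed.

(* Cover Y = F y by the open sets (U_i ∩ f V) y, indexed by pairs (f, i) with
   f in F ∩ U_i; a finite subcover yields the finitely many U_i. *)
Lemma quotient_compact_of_transversal :
  is_compact opO Y -> quotient_compact opG mul F (fun h => F h /\ stab act y h).
Proof.
  intros Hcpt I U HU Hcov. destruct HT as [[_ [HtI _]] _].
  set (P := {p : G * I | F (fst p) /\ U (snd p) (fst p)}).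
  set (N := fun p : P => orbit act
        (fun g => U (snd (proj1_sig p)) g /\ V (mul (inv (fst (proj1_sig p))) g)) y).
  destruct (Hcpt P N) as [l Hl].
  { intros p. apply open_orbit_map, HtI; [apply HU | apply open_mull, HV]. }
  { intros x Yx. destruct (closure_orbit_sub_orbit x Yx) as [f [Ff Hf]].
    destruct (Hcov f Ff) as [i Ui].
    exists (exist _ (f, i) (conj Ff Ui)). exists f. simpl.
    destruct HT as [_ [[_ [_ [_ [Hil _]]]] _]]. rewrite Hil. auto. }
  exists (map snd (map (@proj1_sig _ _) l)).
  intros f' Ff'.
  destruct (Hl (act f' y)) as [[[f i] [Ff Ui]] [Inp [a [[Ua Va] Ha]]]].
  { apply closure_subset. exists f'. auto. }
  simpl in Ua, Va.
  assert (Fa : F a).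
  { apply (translated_transversal_closure f); [exact Ff | exact Va |].
    rewrite Ha. apply closure_subset. exists f'. auto. }
  destruct HFsub as [_ [FM FI]].
  exists i, a, (mul (inv a) f'). split; [| split; [exact Ua | split; [exact Fa | split]]].
  - apply (in_map snd _ (f, i)), (in_map (@proj1_sig _ _) l _ Inp).
  - split; [apply FM; auto |]. unfold stab.
    rewrite act_mul, <- Ha, act_invK. reflexivity.
  - symmetry. apply mulKVg.
Qed.

End Transversal.

End HomogeneousSpace.

Theorem lemma3p4
  (G : Type) (opG : (G -> Prop) -> Prop) (mul : G -> G -> G) (inv : G -> G) (e : G)
  (HG : lcsc_group opG mul inv e)
  (O : Type) (opO : (O -> Prop) -> Prop) (act : G -> O -> O) (x0 : O)
  (HO : homogeneous_space opG mul e opO act x0)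
  (F : G -> Prop) (HFsub : is_subgroup mul inv e F) (HFcl : is_closed opG F)
  (y : O)
  (Hcpt : is_compact opO (in_closure opO (orbit act F y)))
  (Hmin : F_minimal opO act F (in_closure opO (orbit act F y)))
  (Hnc : ~ quotient_compact opG mul F (fun h => F h /\ stab act y h)) :
  in_closure opG (fun g => ~ F g /\ orbit act F y (act g y)) e.
Proof.
  destruct HG as [HT _].
  apply NNPP; intros He.
  destruct (not_in_closure _ _ _ He) as [V [HV [Ve HVsep]]].
  assert (HVF : forall g, V g -> orbit act F y (act g y) -> F g).
  { intros g Vg Og. apply NNPP; intros nFg. exact (HVsep g Vg (conj nFg Og)). }
  exact (Hnc (quotient_compact_of_transversal G opG mul inv e HT O opO act x0 HO
                F y HFsub HFcl Hmin V HV Ve HVF Hcpt)).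
Qed.
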